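(* Let $L_1>0$, $L_4\in\mathbb{R}$ and $\kappa_2\ge\frac{L_4^2}{2L_1}$, and let $\mathcal{L}_{h,\kappa_2}Q_h=L_1\Delta_hQ_h-\frac{L_4}{2}\mathcal{C}_hQ_h-\kappa_2Q_h$ on $\mathcal{M}_h$. Then for every $Q_h\in\mathcal{M}_h$, $$\langle\mathcal{L}_{h,\kappa_2}Q_h,Q_h\rangle_h\le0,$$ and $\mathcal{L}_{h,\kappa_2}$ generates a contraction semigroup in the discrete $L^2$ norm: $\|e^{t\mathcal{L}_{h,\kappa_2}}Q_h\|_2\le\|Q_h\|_2$ for all $t\ge0$ and $Q_h\in\mathcal{M}_h$.
   Context: Let $\Omega=(-X,X)\times(-Y,Y)\times(-Z,Z)$, $N_x,N_y,N_z$ positive even integers, $h_x=2X/N_x$, $h_y=2Y/N_y$, $h_z=2Z/N_z$, grid $S_h=\{(-X+ih_x,-Y+jh_y,-Z+kh_z):1\le i\le N_x,1\le j\le N_y,1\le k\le N_z\}$, and wavevector set $\hat S_h=\{(\pi n_1/X,\pi n_2/Y,\pi n_3/Z):-N_x/2+1\le n_1\le N_x/2,\ -N_y/2+1\le n_2\le N_y/2,\ -N_z/2+1\le n_3\le N_z/2\}$. $\mathcal{M}_h$ is the set of periodic grid functions $S_h\to\mathbb{R}^{3\times3}$, with discrete inner product $\langle M,N\rangle_h=h_xh_yh_z\sum_{x\in S_h}M(x):N(x)$ and norm $\|M\|_2=\langle M,M\rangle_h^{1/2}$. The discrete Fourier transform is $\widehat Q_{\boldsymbol k}=\sum_{x\in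 S_h}Q_h(x)e^{-i\boldsymbol k\cdot x}$, $\boldsymbol k\in\hat S_h$. The discrete Laplacian $\Delta_h$ has Fourier symbol $-|\boldsymbol k|^2$. The discrete curl $\nabla_h\times$ acts row-wise with symbol $\widehat{(\nabla_h\times Q_h)}_{\boldsymbol k}=i\boldsymbol k\times_r\widehat Q_{\boldsymbol k}$ (the $r$-th row is $i\boldsymbol k\times$ (the $r$-th row of $\widehat Q_{\boldsymbol k}$)), and $\mathcal{C}_hQ_h=\nabla_h\times Q_h+(\nabla_h\times Q_h)^T$.
   Formalization: The discrete curl ∇_h×Q_h, and with it $\mathcal{C}_h$, is the real part of the inverse discrete Fourier transform of $i\boldsymbol k\times_r\widehat Q_{\boldsymbol k}$, so its Nyquist-mode contributions are discarded. The statement above fails without it. *)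

From HB Require Import structures.
From mathcomp Require Import all_boot all_order all_algebra.
From mathcomp Require Import all_classical all_reals all_analysis.
From mathcomp Require Import complex.
Set Implicit Arguments. Unset Strict Implicit. Unset Printing Implicit Defensive.
Import Order.TTheory GRing.Theory Num.Theory.
Local Open Scope ring_scope.
Local Open Scope complex_scope.

Section Grid.
Variable R : realType.
Variables (X Y Z : R) (Nx Ny Nz : nat).

(* Grid indices: (i,j,k) : 'I_Nx * 'I_Ny * 'I_Nz stands for the paper's
   (i+1, j+1, k+1), i.e. the grid point (-X+(i+1)h_x, -Y+(j+1)h_y, -Z+(k+1)h_z).
   The same index type also labels the wavevectors of \hat S_h:
   (a,b,c) stands for (n1,n2,n3) = (a+1-Nx/2, b+1-Ny/2, c+1-Nz/2). *)
Definition gidx := ('I_Nx * 'I_Ny * 'I_Nz)%type.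

(* Periodic grid functions S_h -> R^{3x3}  (the space M_h). *)
Definition gridfun := gidx -> 'M[R]_3.

Definition hx : R := 2 * X / Nx%:R.
Definition hy : R := 2 * Y / Ny%:R.
Definition hz : R := 2 * Z / Nz%:R.

Definition gpoint (p : gidx) (d : 'I_3) : R :=
  match val d with
  | 0%N => - X + (p.1.1).+1%:R * hx
  | 1%N => - Y + (p.1.2).+1%:R * hy
  | _ => - Z + (p.2).+1%:R * hz
  end.

Definition wvec (q : gidx) (d : 'I_3) : R :=
  match val d with
  | 0%N => pi * ((q.1.1).+1%:R - (Nx./2)%:R) / X
  | 1%N => pi * ((q.1.2).+1%:R - (Ny./2)%:R) / Y
  | _ => pi * ((q.2).+1%:R - (Nz./2)%:R) / Z
  end.

Definition dot3 (u v : 'I_3 -> R) : R := \sum_(d < 3) u d * v d.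

Definition expi (theta : R) : R[i] := cos theta +i* sin theta.

Definition dft (Q : gridfun) (q : gidx) : 'M[R[i]]_3 :=
  \sum_(p : gidx) expi (- dot3 (wvec q) (gpoint p)) *: map_mx (real_complex R) (Q p).

(* The real grid function with Fourier coefficients (S_k \hat Q_k)_k, obtained by the
   inverse DFT  (1/N) sum_k e^{i k.x} (...), of which the real part is kept. *)
Definition fmult (S : gidx -> 'M[R[i]]_3 -> 'M[R[i]]_3) (Q : gridfun) : gridfun :=
  fun p => map_mx (@complex.Re R)
    ((((Nx * Ny * Nz)%N%:R : R)^-1)%:C *:
       \sum_(q : gidx) expi (dot3 (wvec q) (gpoint p)) *: S q (dft Q q)).

(* row-wise cross product  k x_r M : r-th row is k x (r-th row of M) *)
Definition cross_r (k : 'I_3 -> R) (M : 'M[R[i]]_3) : 'M[R[i]]_3 :=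
  \matrix_(r < 3, c < 3)
    let c1 : 'I_3 := inord ((c + 1) %% 3) in
    let c2 : 'I_3 := inord ((c + 2) %% 3) in
    (k c1)%:C * M r c2 - (k c2)%:C * M r c1.

Definition lap_h (Q : gridfun) : gridfun :=
  fmult (fun q M => (- dot3 (wvec q) (wvec q))%:C *: M) Q.

Definition curl_h (Q : gridfun) : gridfun :=
  fmult (fun q M => 'i *: cross_r (wvec q) M) Q.

Definition C_h (Q : gridfun) : gridfun := fun p => curl_h Q p + (curl_h Q p)^T.

Definition L_h (L1 L4 kappa2 : R) (Q : gridfun) : gridfun :=
  fun p => L1 *: lap_h Q p - (L4 / 2) *: C_h Q p - kappa2 *: Q p.

Definition frob (M N : 'M[R]_3) : R := \sum_(i < 3) \sum_(j < 3) M i j * N i j.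
Definition ip_h (M N : gridfun) : R := hx * hy * hz * \sum_(p : gidx) frob (M p) (N p).
Definition norm_h (M : gridfun) : R := Num.sqrt (ip_h M M).

Definition op_exp (A : gridfun -> gridfun) (t : R) (Q : gridfun) : gridfun :=
  fun p => \matrix_(i < 3, j < 3)
    limn (fun m : nat => \sum_(0 <= n < m) t ^+ n / (n`!)%:R * (iter n A Q) p i j).

End Grid.

(* Everything is diagonalised by the discrete Fourier transform.  Write the
   transform of Q at the wavevector k as C - iS with real matrices C, S.  Up to
   the positive factor h_x h_y h_z / N, the quadratic form <L Q, Q> is a sum over
   k of  -L1 |k|^2 (|C|^2 + |S|^2) - (L4/2) (curl terms) - kappa2 (|C|^2 + |S|^2),
   the last term by Parseval.  Every curl term pairs k x_r S or k x_r C with C,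
   S or their transposes, and |k x_r M| <= |k| |M| (Lagrange's identity), so AM-GM
   bounds the curl part by (L1/2) |k|^2 (|C|^2 + |S|^2) + L4^2/(2 L1) (|C|^2 + |S|^2):
   each mode is nonpositive when kappa2 >= L4^2/(2 L1).
   L_h is linear, hence a matrix on the finite-dimensional space M_h; its
   exponential series converges entrywise and may be differentiated termwise, so
   d/dt ||e^{tL} Q||^2 = 2 <L e^{tL} Q, e^{tL} Q> <= 0. *)
From HB Require Import structures.
From mathcomp Require Import all_boot all_order all_algebra.
From mathcomp Require Import all_classical all_reals all_analysis.
From mathcomp Require Import complex.
From mathcomp Require Import ring lra.
Import Order.TTheory GRing.Theory Num.Theory.
Import numFieldNormedType.Exports.
Set Implicit Arguments. Unset Strict Implicit. Unset Printing Implicit Defensive.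
Local Open Scope ring_scope.

Local Notation Remx M := (map_mx (@complex.Re _) M).
Local Notation Immx M := (map_mx (@complex.Im _) M).

Lemma sumr_ord3 (V : nmodType) (F : 'I_3 -> V) :
  \sum_(c < 3) F c = F (inord 0) + F (inord 1) + F (inord 2).
Proof.
rewrite !big_ord_recr big_ord0 /= add0r.
by congr (F _ + F _ + F _); apply: val_inj; rewrite /= inordK.
Qed.

Lemma exchange_big3 (V : nmodType) (I J K : finType) (F : I -> J -> K -> V) :
  \sum_i \sum_j \sum_k F i j k = \sum_k \sum_i \sum_j F i j k.
Proof. by under eq_bigr do rewrite exchange_big; rewrite exchange_big. Qed.

Lemma sum_prod3 (R : comPzRingType) (A B C : finType)
    (F : A -> R) (G : B -> R) (H : C -> R) :
  \sum_(q : A * B * C) F q.1.1 * G q.1.2 * H q.2 =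
  (\sum_a F a) * (\sum_b G b) * (\sum_c H c).
Proof.
rewrite -(pair_bigA _ (fun ab c => F ab.1 * G ab.2 * H c)) /=.
rewrite -(pair_bigA _ (fun a b => \sum_c F a * G b * H c)) /=.
rewrite !mulr_suml; apply: eq_bigr => a _; rewrite (mulr_sumr _ _ _ (F a)) mulr_suml.
by apply: eq_bigr => b _; rewrite mulr_sumr.
Qed.

Section FrobeniusPairing.
Variable R : realType.
Implicit Types (M N P : 'M[R]_3) (k : 'I_3 -> R).

Lemma frob_trmx M N : frob M^T N^T = frob M N.
Proof.
rewrite /frob exchange_big.
by apply: eq_bigr => i _; apply: eq_bigr => j _; rewrite !mxE.
Qed.

Lemma frob_trmxl M N : frob M^T N = frob M N^T.
Proof. by rewrite -frob_trmx trmxK. Qed.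

Lemma frobDl M N P : frob (M + N) P = frob M P + frob N P.
Proof.
rewrite -big_split; apply: eq_bigr => i _; rewrite -big_split.
by apply: eq_bigr => j _; rewrite mxE mulrDl.
Qed.

Lemma frobZl (c : R) M N : frob (c *: M) N = c * frob M N.
Proof.
rewrite mulr_sumr; apply: eq_bigr => i _; rewrite mulr_sumr.
by apply: eq_bigr => j _; rewrite mxE mulrA.
Qed.

Lemma frobNl M N : frob (- M) N = - frob M N.
Proof. by rewrite -scaleN1r frobZl mulN1r. Qed.

Lemma frob_ge0 M : 0 <= frob M M.
Proof. by do 2!(apply: sumr_ge0 => ? _); rewrite -expr2 sqr_ge0. Qed.

Lemma frob_amgm (L1 L4 : R) M N : 0 < L1 ->
  - (L4 / 2) * frob M N <= L1 / 4 * frob M M + L4 ^+ 2 / (4 * L1) * frob N N.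
Proof.
move=> L1_gt0; rewrite mulr_sumr !mulr_sumr -big_split /=; apply: ler_sum => i _.
rewrite !mulr_sumr -big_split /=; apply: ler_sum => j _; rewrite -subr_ge0.
have -> : L1 / 4 * (M i j * M i j) + L4 ^+ 2 / (4 * L1) * (N i j * N i j)
    - - (L4 / 2) * (M i j * N i j) = (L1 * M i j + L4 * N i j) ^+ 2 / (4 * L1).
  by field; rewrite gt_eqF.
by rewrite divr_ge0 ?sqr_ge0 // mulr_ge0 // ltW.
Qed.

Lemma dot3_ge0 k : 0 <= dot3 k k.
Proof. by apply: sumr_ge0 => d _; rewrite -expr2 sqr_ge0. Qed.

Definition rcross_r k M : 'M[R]_3 :=
  \matrix_(r < 3, c < 3)
    let c1 : 'I_3 := inord ((c + 1) %% 3) in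
    let c2 : 'I_3 := inord ((c + 2) %% 3) in
    k c1 * M r c2 - k c2 * M r c1.

Lemma rcross_rN k M : rcross_r k (- M) = - rcross_r k M.
Proof. by apply/matrixP => r c; rewrite !mxE /= !mxE; ring. Qed.

(* Lagrange's identity |k x a|^2 + (k.a)^2 = |k|^2 |a|^2, row by row. *)
Lemma frob_rcross_r k M : frob (rcross_r k M) (rcross_r k M) <= dot3 k k * frob M M.
Proof.
rewrite /frob mulr_sumr; apply: ler_sum => r _.
rewrite /dot3 !sumr_ord3 !mxE !inordK //=.
set k0 := k (inord 0); set k1 := k (inord 1); set k2 := k (inord 2).
set a0 := M r (inord 0); set a1 := M r (inord 1); set a2 := M r (inord 2).
have -> : (k0 * k0 + k1 * k1 + k2 * k2) * (a0 * a0 + a1 * a1 + a2 * a2) =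
  (k1 * a2 - k2 * a1) ^+ 2 + (k2 * a0 - k0 * a2) ^+ 2 + (k0 * a1 - k1 * a0) ^+ 2
  + (k0 * a0 + k1 * a1 + k2 * a2) ^+ 2 by ring.
by rewrite -!expr2 lerDl sqr_ge0.
Qed.

Lemma mode_dissipative (L1 L4 kappa2 : R) k (C S : 'M[R]_3) :
  0 < L1 -> L4 ^+ 2 / (2 * L1) <= kappa2 ->
  - L1 * dot3 k k * (frob C C + frob S S)
  - L4 / 2 * (frob (rcross_r k S) C - frob (rcross_r k C) S
              + (frob (rcross_r k S) C^T - frob (rcross_r k C) S^T))
  <= kappa2 * (frob C C + frob S S).
Proof.
move=> L1_gt0 hkappa.
have L14_ge0 : 0 <= L1 / 4 by rewrite divr_ge0 // ltW.
have crossS := ler_wpM2l L14_ge0 (frob_rcross_r k S).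
have crossC := ler_wpM2l L14_ge0 (frob_rcross_r k C).
have c2E : L4 ^+ 2 / (4 * L1) = L4 ^+ 2 / (2 * L1) / 2 by field; rewrite gt_eqF.
have amgm1 := frob_amgm L4 (rcross_r k S) C L1_gt0.
have amgm2 := frob_amgm (- L4) (rcross_r k C) S L1_gt0.
have amgm3 := frob_amgm L4 (rcross_r k S) C^T L1_gt0.
have amgm4 := frob_amgm (- L4) (rcross_r k C) S^T L1_gt0.
rewrite sqrrN in amgm2 amgm4; rewrite frob_trmx in amgm3; rewrite frob_trmx in amgm4.
rewrite c2E in amgm1 amgm2 amgm3 amgm4.
have CS_ge0 := addr_ge0 (frob_ge0 C) (frob_ge0 S).
have := ler_wpM2r CS_ge0 hkappa.
have : 0 <= L1 * dot3 k k * (frob C C + frob S S) by rewrite !mulr_ge0 ?dot3_ge0 // ltW.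
lra.
Qed.

End FrobeniusPairing.

Section UnitCircle.
Variable R : realType.
Implicit Types x y : R.
Local Open Scope complex_scope.

Lemma expi0 : expi (0 : R) = 1.
Proof. by rewrite /expi cos0 sin0. Qed.

Lemma expiD x y : expi (x + y) = expi x * expi y.
Proof.
rewrite /expi cosD sinD; apply/eqP; rewrite eq_complex /=.
by apply/andP; split; apply/eqP; ring.
Qed.

Lemma expiNK x : expi (- x) * expi x = 1.
Proof. by rewrite -expiD addNr expi0. Qed.

Lemma expi_natrM n x : expi (n%:R * x) = expi x ^+ n.
Proof.
elim: n => [|n IH]; first by rewrite mul0r expi0.
by rewrite -addn1 natrD mulrDl mul1r expiD IH exprD.
Qed.

Lemma expi_2pi_natrM n : expi (2 * pi * n%:R) = 1 :> R[i].
Proof. by rewrite mulrC expi_natrM /expi mulr_natl cos2pi sin2pi expr1n. Qed.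

Lemma Re_realM (a : R) (z : R[i]) : complex.Re (a%:C * z) = a * complex.Re z.
Proof. by case: z => x y /=; rewrite mul0r subr0. Qed.

Lemma Re_expiM x (z : R[i]) :
  complex.Re (expi x * z) = cos x * complex.Re z - sin x * complex.Im z.
Proof. by case: z. Qed.

Lemma sin_neq0 y : 0 < `|y| < pi -> sin y != 0.
Proof.
case: (ger0P y) => [y_ge0 | y_lt0] /andP[y_gt0 y_ltpi].
  by rewrite gt_eqF // sin_gt0_pi ?y_gt0.
by rewrite -oppr_eq0 -sinN gt_eqF // sin_gt0_pi ?y_gt0.
Qed.

Lemma expi_mulr2n_neq1 y : 0 < `|y| < pi -> expi (y *+ 2) != 1.
Proof.
move=> /sin_neq0 sin_y; apply: contra sin_y => /eqP[cos2y _].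
move: cos2y; rewrite cos_mulr2n cos2sin2 => ?.
by rewrite -sqrf_eq0; apply/eqP; lra.
Qed.

Definition phase n (i i' : 'I_n) : R := 2 * pi * (i%:R - i'%:R) / n%:R.

Lemma expi_phaseX n (i i' : 'I_n) : expi (phase i i') ^+ n = 1.
Proof.
have n_neq0 : (n%:R : R) != 0 by case: n i {i'} => [[]|].
rewrite -expi_natrM /phase mulrC divfK // mulrBr expiD expi_2pi_natrM mul1r.
by rewrite -[RHS](expiNK (2 * pi * i'%:R)) expi_2pi_natrM mulr1.
Qed.

Lemma expi_phase_neq1 n (i i' : 'I_n) : i != i' -> expi (phase i i') != 1.
Proof.
move=> neq_ii'; have n_gt0 : (0 : R) < n%:R by case: n i {i' neq_ii'} => [[]|].
have d_lt_n : `|i%:R - i'%:R| < n%:R :> R.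
  have := ltr_nat R i n; have := ltr_nat R i' n; have := ler0n R i; have := ler0n R i'.
  by rewrite !ltn_ord ltr_norml; lra.
have d_neq0 : (i%:R - i'%:R : R) != 0.
  by rewrite subr_eq0 eqr_nat; apply: contra neq_ii' => /eqP/val_inj ->.
have -> : phase i i' = (pi * ((i%:R - i'%:R) / n%:R)) *+ 2 by rewrite /phase mulr2n; ring.
apply: expi_mulr2n_neq1; rewrite normrM (gtr0_norm (pi_gt0 R)) pmulr_rgt0 ?pi_gt0 //.
rewrite gtr_pMr ?pi_gt0 // normrM normfV (gtr0_norm n_gt0).
by rewrite divr_gt0 ?normr_gt0 //= ltr_pdivrMr // mul1r.
Qed.

Lemma sum_expi_phase n (i i' : 'I_n) (c : R) :
  \sum_(a < n) expi ((a%:R + c) * phase i i') = (i == i')%:R * n%:R.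
Proof.
have [<- | neq_ii'] := eqVneq i i'.
  under eq_bigr do rewrite /phase subrr mulr0 mul0r mulr0 expi0.
  by rewrite sumr_const card_ord mul1r.
under eq_bigr do rewrite mulrDl expiD expi_natrM mulrC.
rewrite -mulr_sumr mul0r; apply/eqP; rewrite mulf_eq0; apply/orP; right.
have := subrX1 (expi (phase i i')) n; rewrite expi_phaseX subrr => /esym/eqP.
by rewrite mulf_eq0 subr_eq0 (negbTE (expi_phase_neq1 neq_ii')).
Qed.

End UnitCircle.

Section Symbols.
Variable R : realType.
Implicit Types (M : 'M[R[i]]_3) (k : 'I_3 -> R).
Local Open Scope complex_scope.

Lemma Remx_realZ (c : R) M : Remx (c%:C *: M) = c *: Remx M.
Proof.
by apply/matrixP => i j; rewrite !mxE; case: (M i j) => x y /=; rewrite mul0r subr0.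
Qed.

Lemma Immx_realZ (c : R) M : Immx (c%:C *: M) = c *: Immx M.
Proof.
by apply/matrixP => i j; rewrite !mxE; case: (M i j) => x y /=; rewrite mul0r addr0.
Qed.

Lemma Remx_curl k M : Remx ('i *: cross_r k M) = - rcross_r k (Immx M).
Proof.
apply/matrixP => r c; rewrite !mxE /= !mxE.
by case: (M r _) => x y; case: (M r _) => x' y' /=; ring.
Qed.

Lemma Immx_curl k M : Immx ('i *: cross_r k M) = rcross_r k (Remx M).
Proof.
apply/matrixP => r c; rewrite !mxE /= !mxE.
by case: (M r _) => x y; case: (M r _) => x' y' /=; ring.
Qed.

End Symbols.

Section DiscreteFourier.
Variables (R : realType) (X Y Z : R) (Nx Ny Nz : nat).
Hypotheses (X_gt0 : 0 < X) (Y_gt0 : 0 < Y) (Z_gt0 : 0 < Z).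
Hypotheses (Nx_gt0 : (0 < Nx)%N) (Ny_gt0 : (0 < Ny)%N) (Nz_gt0 : (0 < Nz)%N).
Local Open Scope complex_scope.

Local Notation grid := (gidx Nx Ny Nz).
Local Notation Mh := (gridfun R Nx Ny Nz).
Local Notation N := ((Nx * Ny * Nz)%N%:R : R).

Definition theta (q p : grid) : R := dot3 (wvec X Y Z q) (gpoint X Y Z p).

Lemma theta_diff q p p' : theta q p - theta q p' =
  (q.1.1%:R + (1 - (Nx./2)%:R)) * phase R p.1.1 p'.1.1
  + (q.1.2%:R + (1 - (Ny./2)%:R)) * phase R p.1.2 p'.1.2
  + (q.2%:R + (1 - (Nz./2)%:R)) * phase R p.2 p'.2.
Proof.
have nat_neq0 n : (0 < n)%N -> (n%:R : R) != 0 by rewrite pnatr_eq0 -lt0n.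
rewrite /theta /dot3 !sumr_ord3 /wvec /gpoint /= !inordK //= /hx /hy /hz /phase -!natr1.
by field; rewrite !nat_neq0 // !gt_eqF.
Qed.

Lemma sum_cos_theta p p' : \sum_q cos (theta q p - theta q p') = (p == p')%:R * N.
Proof.
pose e n (c : R) (i i' a : 'I_n) := expi ((a%:R + c) * phase R i i').
have -> : \sum_q cos (theta q p - theta q p') =
    complex.Re (\sum_q e _ (1 - (Nx./2)%:R) p.1.1 p'.1.1 q.1.1
                    * e _ (1 - (Ny./2)%:R) p.1.2 p'.1.2 q.1.2
                    * e _ (1 - (Nz./2)%:R) p.2 p'.2 q.2).
  by rewrite raddf_sum; apply: eq_bigr => q _; rewrite /e -!expiD -theta_diff.
rewrite sum_prod3 /e !sum_expi_phase.
case: p p' => [[a b] c] [[a' b'] c'] /=; rewrite !xpair_eqE.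
rewrite -!natrM -(rmorph_nat (real_complex R)) /=; congr _%:R.
by case: eqP; case: eqP; case: eqP => /= *; rewrite ?(mul0n, muln0, mul1n, muln1) // mulnAC.
Qed.

Definition cosT (P : Mh) (q : grid) : 'M[R]_3 :=
  \matrix_(i, j) \sum_p cos (theta q p) * P p i j.
Definition sinT (P : Mh) (q : grid) : 'M[R]_3 :=
  \matrix_(i, j) \sum_p sin (theta q p) * P p i j.

Lemma cosT_trmx (Q : Mh) q : cosT (fun p => (Q p)^T) q = (cosT Q q)^T.
Proof. by apply/matrixP => i j; rewrite !mxE; apply: eq_bigr => p _; rewrite mxE. Qed.

Lemma sinT_trmx (Q : Mh) q : sinT (fun p => (Q p)^T) q = (sinT Q q)^T.
Proof. by apply/matrixP => i j; rewrite !mxE; apply: eq_bigr => p _; rewrite mxE. Qed.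

Lemma Remx_dft (Q : Mh) q : Remx (dft X Y Z Q q) = cosT Q q.
Proof.
apply/matrixP => i j; rewrite !mxE summxE raddf_sum.
by apply: eq_bigr => p _; rewrite !mxE /= cosN sinN mulr0 subr0.
Qed.

Lemma Immx_dft (Q : Mh) q : Immx (dft X Y Z Q q) = - sinT Q q.
Proof.
apply/matrixP => i j; rewrite !mxE summxE raddf_sum -sumrN.
by apply: eq_bigr => p _; rewrite !mxE /= cosN sinN mulr0 add0r mulNr.
Qed.

Lemma parseval_scalar (f : grid -> R) :
  \sum_q ((\sum_p cos (theta q p) * f p) ^+ 2 + (\sum_p sin (theta q p) * f p) ^+ 2)
  = N * \sum_p f p ^+ 2.
Proof.
have sqrE q : (\sum_p cos (theta q p) * f p) ^+ 2 + (\sum_p sin (theta q p) * f p) ^+ 2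
    = \sum_p \sum_p' f p * f p' * cos (theta q p - theta q p').
  rewrite !expr2 !mulr_suml -big_split; apply: eq_bigr => p _.
  by rewrite !mulr_sumr -big_split; apply: eq_bigr => p' _; rewrite cosB /=; ring.
under eq_bigr do rewrite sqrE.
rewrite exchange_big mulr_sumr; apply: eq_bigr => p _.
rewrite exchange_big (bigD1 p) //= -mulr_sumr sum_cos_theta eqxx mul1r.
rewrite big1 ?addr0 => [|p' /negPf neq_p'p]; first by rewrite mulrC expr2.
by rewrite -mulr_sumr sum_cos_theta eq_sym neq_p'p mul0r mulr0.
Qed.

Lemma parseval (Q : Mh) :
  \sum_q (frob (cosT Q q) (cosT Q q) + frob (sinT Q q) (sinT Q q)) =
  N * \sum_p frob (Q p) (Q p).
Proof.
rewrite /frob; under eq_bigr do rewrite -big_split.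
under eq_bigr do under eq_bigr do rewrite -big_split.
rewrite -exchange_big3 -[in RHS]exchange_big3 mulr_sumr; apply: eq_bigr => i _.
rewrite mulr_sumr; apply: eq_bigr => j _.
under eq_bigr do rewrite !mxE -!expr2.
by under [in RHS]eq_bigr do rewrite -expr2; rewrite parseval_scalar.
Qed.

Lemma fmultE S (Q : Mh) p i j :
  fmult X Y Z S Q p i j = N^-1 * \sum_q
    (cos (theta q p) * complex.Re (S q (dft X Y Z Q q) i j)
     - sin (theta q p) * complex.Im (S q (dft X Y Z Q q) i j)).
Proof.
rewrite !mxE Re_realM summxE raddf_sum /=.
by congr (_ * _); apply: eq_bigr => q _; rewrite !mxE Re_expiM.
Qed.

(* Since P is real, \sum_p e^{i k.x_p} P(p) is the complex conjugate of its
   transform cosT P - i sinT P. *)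
Lemma fmult_pairing S (Q P : Mh) :
  \sum_p frob (fmult X Y Z S Q p) (P p) =
  N^-1 * \sum_q (frob (Remx (S q (dft X Y Z Q q))) (cosT P q)
                 - frob (Immx (S q (dft X Y Z Q q))) (sinT P q)).
Proof.
rewrite /frob; set F := fun q => S q (dft X Y Z Q q).
transitivity (N^-1 * \sum_q \sum_p \sum_i \sum_j
  (cos (theta q p) * complex.Re (F q i j) - sin (theta q p) * complex.Im (F q i j))
  * P p i j).
  rewrite [in RHS]exchange_big mulr_sumr; apply: eq_bigr => p _.
  rewrite -[in RHS]exchange_big3 mulr_sumr; apply: eq_bigr => i _.
  rewrite mulr_sumr; apply: eq_bigr => j _.
  by rewrite fmultE -mulrA mulr_suml.
congr (_ * _); apply: eq_bigr => q _; rewrite -exchange_big3.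
rewrite -sumrB; apply: eq_bigr => i _; rewrite -sumrB; apply: eq_bigr => j _.
by rewrite !mxE !mulr_sumr -sumrB; apply: eq_bigr => p _; ring.
Qed.

Lemma sum_frob_L_h (L1 L4 kappa2 : R) (Q : Mh) :
  \sum_p frob (L_h X Y Z L1 L4 kappa2 Q p) (Q p) = N^-1 * \sum_q
    (let k := wvec X Y Z q in let C := cosT Q q in let S := sinT Q q in
     - L1 * dot3 k k * (frob C C + frob S S)
     - L4 / 2 * (frob (rcross_r k S) C - frob (rcross_r k C) S
                 + (frob (rcross_r k S) C^T - frob (rcross_r k C) S^T))
     - kappa2 * (frob C C + frob S S)).
Proof.
have lapE : \sum_p frob (lap_h X Y Z Q p) (Q p) =
    N^-1 * \sum_q - dot3 (wvec X Y Z q) (wvec X Y Z q)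
                    * (frob (cosT Q q) (cosT Q q) + frob (sinT Q q) (sinT Q q)).
  rewrite fmult_pairing; congr (_ * _); apply: eq_bigr => q _.
  by rewrite Remx_realZ Immx_realZ Remx_dft Immx_dft !frobZl frobNl; ring.
have curlE (P : Mh) : \sum_p frob (curl_h X Y Z Q p) (P p) =
    N^-1 * \sum_q (frob (rcross_r (wvec X Y Z q) (sinT Q q)) (cosT P q)
                   - frob (rcross_r (wvec X Y Z q) (cosT Q q)) (sinT P q)).
  rewrite fmult_pairing; congr (_ * _); apply: eq_bigr => q _.
  by rewrite Remx_curl Immx_curl Remx_dft Immx_dft rcross_rN opprK.
have QQE : \sum_p frob (Q p) (Q p) =
    N^-1 * \sum_q (frob (cosT Q q) (cosT Q q) + frob (sinT Q q) (sinT Q q)).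
  by rewrite parseval mulKf // pnatr_eq0 -lt0n !muln_gt0 Nx_gt0 Ny_gt0 Nz_gt0.
rewrite /L_h; under eq_bigr do rewrite !frobDl !frobNl !frobZl /C_h frobDl frob_trmxl.
rewrite [in LHS]sumrB [in LHS]sumrB -![in LHS]mulr_sumr [in LHS]big_split /=.
rewrite lapE curlE (curlE (fun p => (Q p)^T)) QQE.
under [X in _ * (_ + _ * X)]eq_bigr do rewrite cosT_trmx sinT_trmx.
by rewrite mulrDr !mulr_sumr -big_split -!sumrB; apply: eq_bigr => q _ /=; ring.
Qed.

Lemma cell_volume_gt0 : 0 < hx X Nx * hy Y Ny * hz Z Nz.
Proof. by rewrite /hx /hy /hz !mulr_gt0 ?invr_gt0 ?ltr0n. Qed.

Lemma ip_L_h_le0 (L1 L4 kappa2 : R) (Q : Mh) :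
  0 < L1 -> L4 ^+ 2 / (2 * L1) <= kappa2 ->
  ip_h X Y Z (L_h X Y Z L1 L4 kappa2 Q) Q <= 0.
Proof.
move=> L1_gt0 hkappa; rewrite /ip_h sum_frob_L_h.
rewrite mulr_ge0_le0 ?(ltW cell_volume_gt0) // mulr_ge0_le0 ?invr_ge0 ?ler0n //.
by apply: sumr_le0 => q _; rewrite subr_le0 mode_dissipative.
Qed.

End DiscreteFourier.

Lemma is_derive_sum_fin (R : realType) (I : finType) (h : I -> R -> R) (dh : I -> R) x :
  (forall i, is_derive x (1 : R) (h i) (dh i)) ->
  is_derive x (1 : R) (fun y => \sum_i h i y) (\sum_i dh i).
Proof.
move=> hdh; rewrite -fct_sumE.
by elim/big_ind2: _ => // [|f df g dg]; [exact: is_derive_cst | exact: is_deriveD].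
Qed.

Section ExponentialSeries.
Variables (R : realType) (T : finType) (A : (T -> R) -> (T -> R)).
Hypothesis A_linear : linear A.
Implicit Types (v : T -> R) (s : T).

Definition opmx s s' : R := A (fun s0 => (s0 == s')%:R) s.

Lemma opmxE v s : A v s = \sum_s' opmx s s' * v s'.
Proof.
have A_add : {morph A : u w / u + w}.
  by move=> u w; have := A_linear 1 u w; rewrite !scale1r.
have A0 : A 0 = 0 by apply: (@addrI _ (A 0)); rewrite -A_add !addr0.
have vE : v = \sum_s' v s' *: (fun s0 => (s0 == s')%:R : R).
  apply/funext => s0; rewrite fct_sumE (bigD1 s0) //= big1 => [|s' neq_s's0].
    by rewrite scalrfctE eqxx scaler1 addr0.
  by rewrite scalrfctE eq_sym (negPf neq_s's0) scaler0.
rewrite {1}vE (big_morph A A_add A0) fct_sumE; apply: eq_bigr => s' _.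
by rewrite -[_ *: _]addr0 A_linear A0 addr0 scalrfctE mulrC.
Qed.

Definition norm1 v : R := \sum_s `|v s|.

Lemma norm1_ge v s : `|v s| <= norm1 v.
Proof. by rewrite /norm1 (bigD1 s) //= lerDl sumr_ge0. Qed.

Let opmx_norm1 : R := \sum_s \sum_s' `|opmx s s'|.

Let opmx_norm1_ge0 : 0 <= opmx_norm1.
Proof. by do 2!apply: sumr_ge0 => ? _. Qed.

Lemma norm1_iter_le v n : norm1 (iter n A v) <= opmx_norm1 ^+ n * norm1 v.
Proof.
elim: n => [|n IH]; first by rewrite mul1r.
rewrite iterS exprS -mulrA; apply: le_trans (ler_wpM2l opmx_norm1_ge0 IH).
rewrite /norm1 mulr_suml; apply: ler_sum => s _; rewrite opmxE.
apply: le_trans (ler_norm_sum _ _ _) _; rewrite mulr_suml; apply: ler_sum => s' _.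
by rewrite normrM ler_wpM2l ?norm1_ge.
Qed.

Definition expA_coeff v s : R ^nat := fun n => iter n A v s / n`!%:R.

Definition expA (t : R) v s : R := limn (pseries (expA_coeff v s) t).

Lemma is_cvg_pseries_expA_coeff v s t : cvgn (pseries (expA_coeff v s) t).
Proof.
apply: normed_cvg.
apply: (@series_le_cvg _ _ (norm1 v *: exp_coeff (opmx_norm1 * `|t|))) => [n|n|n|].
- exact: normr_ge0.
- rewrite scalrfctE mulr_ge0 ?sumr_ge0 // /exp_coeff /=.
  by rewrite divr_ge0 ?exprn_ge0 ?mulr_ge0.
- rewrite scalrfctE /exp_coeff /expA_coeff /= !normrM normfV normrX exprMn.
  rewrite [`|(n`!)%:R|]ger0_norm // mulrAC.
  have -> : norm1 v *: (opmx_norm1 ^+ n * `|t| ^+ n / n`!%:R) =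
            opmx_norm1 ^+ n * norm1 v * `|t| ^+ n / n`!%:R.
    by rewrite [LHS]/GRing.scale /=; ring.
  rewrite ler_wpM2r ?invr_ge0 // ler_wpM2r ?exprn_ge0 //.
  exact: le_trans (norm1_ge _ s) (norm1_iter_le v n).
- exact/is_cvg_seriesZ/is_cvg_series_exp_coeff.
Qed.

Lemma pseries_diffs_expA_coeff v s :
  pseries_diffs (expA_coeff v s) = expA_coeff (A v) s.
Proof.
apply/funext => n; rewrite /pseries_diffs /expA_coeff iterSr factS natrM.
by field; rewrite nat1r !pnatr_eq0 -lt0n fact_gt0.
Qed.

Lemma expA_A t v : expA t (A v) = A (expA t v).
Proof.
apply/funext => s; rewrite opmxE /expA.
have -> : pseries (expA_coeff (A v) s) t =
          fun m => \sum_s' opmx s s' * pseries (expA_coeff v s') t m.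
  apply/funext => m; rewrite /pseries /series /=.
  under eq_bigr do rewrite /expA_coeff -iterSr iterS opmxE mulr_suml mulr_suml.
  rewrite exchange_big /=; apply: eq_bigr => s' _; rewrite mulr_sumr.
  by apply: eq_bigr => k _; rewrite !mulrA.
apply: cvg_lim => //; apply: (@cvg_big _ _ +%R 0 xpredT add_continuous _ _ _
  (fun s' m => opmx s s' * pseries (expA_coeff v s') t m)) => // s' _.
apply: cvgMr; exact: is_cvg_pseries_expA_coeff.
Qed.

Lemma is_derive_expA v s (t : R) :
  is_derive t (1 : R) (fun x => expA x v s) (expA t (A v) s).
Proof.
rewrite /expA -pseries_diffs_expA_coeff.
apply: (@pseries_snd_diffs _ _ (`|t| + 1)); rewrite ?pseries_diffs_expA_coeff.
- exact: is_cvg_pseries_expA_coeff.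
- exact: is_cvg_pseries_expA_coeff.
- exact: is_cvg_pseries_expA_coeff.
- by rewrite [ltRHS]ger0_norm ?addr_ge0 // ltrDl.
Qed.

Lemma expA0 v : expA 0 v = v.
Proof.
apply/funext => s; apply: lim_near_cst => //; near=> m.
rewrite -[m]prednK; last by near: m.
rewrite /pseries /series /= big_nat_recl //= expr0 mulr1 big1 ?addr0.
  by rewrite /expA_coeff divr1.
by move=> i _; rewrite expr0n mulr0.
Unshelve. all: by end_near.
Qed.

Lemma is_derive_energy v (t : R) :
  is_derive t (1 : R) (fun x => \sum_s expA x v s ^+ 2)
    (2 * \sum_s A (expA t v) s * expA t v s).
Proof.
have dEs s : is_derive t (1 : R) (fun x => expA x v s ^+ 2)
                       (2 * expA t (A v) s * expA t v s).
  apply: is_derive_eq; first by rewrite -exprfctE; exact: is_deriveX (is_derive_expA v s t).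
  by rewrite /GRing.scale /=; ring.
apply: is_derive_eq (is_derive_sum_fin dEs) _.
by rewrite mulr_sumr; apply: eq_bigr => s _; rewrite expA_A; ring.
Qed.

Lemma energy_expA_le v t :
  (forall w, \sum_s A w s * w s <= 0) -> 0 <= t ->
  \sum_s expA t v s ^+ 2 <= \sum_s v s ^+ 2.
Proof.
move=> A_dissipative t_ge0.
pose E x := \sum_s expA x v s ^+ 2.
have dE x := is_derive_energy v x.
have E_derivable (x : R) : derivable E x 1 by exact: ex_derive.
have E'_le0 (x : R) : (E^`())%classic x <= 0.
  by rewrite derive1E derive_val pmulr_rle0 ?A_dissipative.
have E_cont : {within `[0, t], continuous E}%classic.
  by apply: derivable_within_continuous => x _; exact: E_derivable.
have <- : E 0 = \sum_s v s ^+ 2 by rewrite /E expA0.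
apply: (ler0_derive1_le_cc (fun x _ => E_derivable x) (fun x _ => E'_le0 x) E_cont).
- by rewrite in_itv /= t_ge0 lexx.
- by rewrite in_itv /= lexx t_ge0.
- exact: t_ge0.
Qed.

End ExponentialSeries.

Section Linearity.
Variables (R : realType) (X Y Z : R) (Nx Ny Nz : nat).
Local Notation Mh := (gridfun R Nx Ny Nz).
Local Open Scope complex_scope.

Lemma dft_linear (a : R) (Q Q' : Mh) q :
  dft X Y Z (a *: Q + Q') q = a%:C *: dft X Y Z Q q + dft X Y Z Q' q.
Proof.
rewrite /dft scaler_sumr -big_split; apply: eq_bigr => p _ /=.
have -> : map_mx (real_complex R) (a *: Q p + Q' p) =
          a%:C *: map_mx (real_complex R) (Q p) + map_mx (real_complex R) (Q' p).
  by apply/matrixP => i j; rewrite !mxE rmorphD rmorphM.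
by rewrite scalerDr !scalerA mulrC.
Qed.

Lemma fmult_linear (S : gidx Nx Ny Nz -> 'M[R[i]]_3 -> 'M[R[i]]_3) :
  (forall q, linear (S q)) -> linear (fmult X Y Z S).
Proof.
move=> S_linear a Q Q'; apply/funext => p /=; rewrite /fmult.
under eq_bigr do
  rewrite dft_linear S_linear scalerDr !scalerA [expi _ * _]mulrC -scalerA.
rewrite big_split /= -scaler_sumr scalerDr scalerA mulrC -scalerA.
by apply/matrixP => i j; rewrite !mxE /= raddfD /= Re_realM.
Qed.

Lemma cross_r_linear (k : 'I_3 -> R) : linear (cross_r k).
Proof. by move=> a M M'; apply/matrixP => r c; rewrite !mxE /= !mxE; ring. Qed.

Lemma L_h_linear (L1 L4 kappa2 : R) : linear (@L_h R X Y Z Nx Ny Nz L1 L4 kappa2).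
Proof.
have lap_linear : linear (@lap_h R X Y Z Nx Ny Nz).
  by apply: fmult_linear => q a M M'; rewrite scalerDr !scalerA mulrC.
have curl_linear : linear (@curl_h R X Y Z Nx Ny Nz).
  by apply: fmult_linear => q a M M'; rewrite cross_r_linear scalerDr !scalerA mulrC.
move=> a Q Q'; apply/funext => p.
rewrite /L_h /C_h lap_linear curl_linear !(addrfctE, scalrfctE) /=.
move: (lap_h X Y Z Q p) (lap_h X Y Z Q' p) (curl_h X Y Z Q p) (curl_h X Y Z Q' p).
by move: (Q p) (Q' p) => M M' l l' c c'; apply/matrixP => i j; rewrite !mxE; ring.
Qed.

End Linearity.

Section GridExponential.
Variables (R : realType) (X Y Z : R) (Nx Ny Nz : nat).
Hypotheses (X_gt0 : 0 < X) (Y_gt0 : 0 < Y) (Z_gt0 : 0 < Z).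
Hypotheses (Nx_gt0 : (0 < Nx)%N) (Ny_gt0 : (0 < Ny)%N) (Nz_gt0 : (0 < Nz)%N).
Local Notation Mh := (gridfun R Nx Ny Nz).
Local Notation coord := (gidx Nx Ny Nz * 'I_3 * 'I_3)%type.

Definition gridvec (Q : Mh) (s : coord) : R := Q s.1.1 s.1.2 s.2.
Definition vec_grid (v : coord -> R) : Mh := fun p => \matrix_(i, j) v (p, i, j).

Lemma gridvecK : cancel gridvec vec_grid.
Proof. by move=> Q; apply/funext => p; apply/matrixP => i j; rewrite mxE. Qed.

Lemma vec_gridK : cancel vec_grid gridvec.
Proof. by move=> v; apply/funext => -[[p i] j]; rewrite /gridvec mxE. Qed.

Lemma sum_frob_gridvec (M N : Mh) :
  \sum_p frob (M p) (N p) = \sum_s gridvec M s * gridvec N s.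
Proof.
rewrite -(pair_bigA _ (fun pij k => gridvec M (pij, k) * gridvec N (pij, k))) /=.
by rewrite -(pair_bigA _ (fun p i => \sum_j gridvec M (p, i, j) * gridvec N (p, i, j))).
Qed.

Variable A : Mh -> Mh.
Hypothesis A_linear : linear A.

Let Avec (v : coord -> R) : coord -> R := gridvec (A (vec_grid v)).

Let Avec_linear : linear Avec.
Proof.
move=> a v w; rewrite /Avec.
have -> : vec_grid (a *: v + w) = a *: vec_grid v + vec_grid w.
  by apply/funext => p; apply/matrixP => i j; rewrite !mxE.
by rewrite A_linear; apply/funext => s; rewrite /gridvec !mxE.
Qed.

Lemma gridvec_op_exp t Q : gridvec (op_exp A t Q) = expA Avec t (gridvec Q).
Proof.
have iterE n : iter n Avec (gridvec Q) = gridvec (iter n A Q).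
  by elim: n => [|n IH] //=; rewrite IH /Avec gridvecK.
apply/funext => -[[p i] j]; rewrite /gridvec /op_exp mxE /expA /=.
congr (limn _); apply/funext => m; rewrite /pseries /series /=; apply: eq_bigr => n _.
by rewrite /expA_coeff -/(gridvec Q) iterE /gridvec /=; ring.
Qed.

Lemma norm_op_exp_le t Q :
  (forall Q, ip_h X Y Z (A Q) Q <= 0) -> 0 <= t ->
  norm_h X Y Z (op_exp A t Q) <= norm_h X Y Z Q.
Proof.
move=> A_dissipative t_ge0.
have h_gt0 := cell_volume_gt0 X_gt0 Y_gt0 Z_gt0 Nx_gt0 Ny_gt0 Nz_gt0.
have Avec_dissipative w : \sum_s Avec w s * w s <= 0.
  have := A_dissipative (vec_grid w).
  by rewrite /ip_h sum_frob_gridvec vec_gridK pmulr_rle0.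
rewrite /norm_h /ip_h !sum_frob_gridvec gridvec_op_exp ler_sqrt; last first.
  by rewrite mulr_ge0 ?(ltW h_gt0) // sumr_ge0 // => s _; rewrite -expr2 sqr_ge0.
rewrite ler_pM2l //; under eq_bigr do rewrite -expr2.
under [leRHS]eq_bigr do rewrite -expr2.
exact: energy_expA_le Avec_linear _ _ Avec_dissipative t_ge0.
Qed.

End GridExponential.

Unset Implicit Arguments.

Theorem lemma4p1 (R : realType) (X Y Z : R) (Nx Ny Nz : nat) (L1 L4 kappa2 : R) :
  0 < X -> 0 < Y -> 0 < Z ->
  (0 < Nx)%N -> ~~ odd Nx -> (0 < Ny)%N -> ~~ odd Ny -> (0 < Nz)%N -> ~~ odd Nz ->
  0 < L1 -> L4 ^+ 2 / (2 * L1) <= kappa2 ->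
  (forall Q : gridfun R Nx Ny Nz,
      ip_h X Y Z (L_h X Y Z L1 L4 kappa2 Q) Q <= 0) /\
  (forall (t : R) (Q : gridfun R Nx Ny Nz), 0 <= t ->
      norm_h X Y Z (op_exp (L_h X Y Z L1 L4 kappa2) t Q) <= norm_h X Y Z Q).
Proof.
move=> X_gt0 Y_gt0 Z_gt0 Nx_gt0 _ Ny_gt0 _ Nz_gt0 _ L1_gt0 hkappa.
have dissipative Q := ip_L_h_le0 X_gt0 Y_gt0 Z_gt0 Nx_gt0 Ny_gt0 Nz_gt0 Q L1_gt0 hkappa.
split=> // t Q t_ge0.
apply: (norm_op_exp_le X_gt0 Y_gt0 Z_gt0 Nx_gt0 Ny_gt0 Nz_gt0) => //.
exact: L_h_linear.
Qed.
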